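(* Let $f:\{0,1,2,3,4,5\}^*\to\{0,1,2,3,4,5\}^*$ be the morphism $f(0)=01$, $f(1)=23$, $f(2)=45$, $f(3)=02$, $f(4)=05$, $f(5)=25$, and let $\rho$ be the coding $\rho(0)=\rho(1)=\rho(2)=\rho(3)=0$, $\rho(4)=\rho(5)=1$. Let $\mathbf{w}=\rho(f^\omega(0))$, an infinite word over $\{0,1\}$. Then $\mathbf{w}$ contains no squares of order $\geq 3$ and contains exactly $5$ distinct squares. Moreover, $\mathbf{w}$ is the lexicographically least infinite binary word among all infinite binary words that are generated by a $2$-automaton with at most $6$ states, contain no square of order $\geq 3$, and contain only $5$ distinct squares.
   Context: A square is a nonempty word of the form $xx$; its order is $|x|$. ''Contains'' means as a factor (contiguous subword). A morphism $h$ satisfies $h(xy)=h(x)h(y)$; if $h(a)=ax$ with $h^i(x)\neq\epsilon$ for all $i$, then $h^\omega(a)=a\,x\,h(x)\,h^2(x)\cdots$ is the fixed point of $h$ starting with $a$. A coding is a morphism sending letters to letters. A $k$-automaton (DFAO) with $s$ states generates the infinite word $(a_n)_{n\ge0}$ if, on input the base-$k$ representation of $n$ (most significant digit first), it ends in a state whose output is $a_n$. Equivalently (Cobham), the word is the image under a coding of a fixed point of a $k$-uniform morphism over an alphabet of $s$ letters. *)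

From mathcomp Require Import all_boot.
Set Implicit Arguments. Unset Strict Implicit. Unset Printing Implicit Defensive.

(* Infinite words over {0,1} are functions nat -> bool (false = 0, true = 1). *)
Definition bword := nat -> bool.

Definition factor_at (w : bword) (i len : nat) : seq bool :=
  [seq w (i + k) | k <- iota 0 len].

Definition is_factor (w : bword) (s : seq bool) : Prop :=
  exists i, factor_at w i (size s) = s.

Definition is_square_of_order (s : seq bool) (n : nat) : Prop :=
  exists x : seq bool, size x = n /\ 0 < n /\ s = x ++ x.

Definition is_square (s : seq bool) : Prop := exists n, is_square_of_order s n.

Definition no_square_of_order_ge (w : bword) (m : nat) : Prop :=
  forall s n, is_factor w s -> is_square_of_order s n -> n < m.

Definition num_distinct_squares (w : bword) (k : nat) : Prop :=
  exists S : seq (seq bool), uniq S /\ size S = k /\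
    forall s, s \in S <-> (is_square s /\ is_factor w s).

Definition lex_le (u v : bword) : Prop :=
  (forall n, u n = v n) \/
  exists n, (forall i, i < n -> u i = v i) /\ u n = false /\ v n = true.

(* Base-2 representation of n, most significant digit first, no leading
   zeros; the representation of 0 is the empty word. Digit 1 = true. *)
Fixpoint lsb_digits (fuel n : nat) : seq bool :=
  match fuel with
  | 0 => [::]
  | fuel'.+1 => if n == 0 then [::] else odd n :: lsb_digits fuel' n./2
  end.
Definition base2 (n : nat) : seq bool := rev (lsb_digits n n).

Record dfao2 (s : nat) := Dfao2 {
  q0 : 'I_s;
  delta : 'I_s -> bool -> 'I_s;
  out : 'I_s -> bool
}.

Definition generates (s : nat) (A : dfao2 s) (w : bword) : Prop :=
  forall n, w n = out A (foldl (delta A) (q0 A) (base2 n)).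

Definition two_automatic_le (m : nat) (w : bword) : Prop :=
  exists s, s <= m /\ exists A : dfao2 s, generates A w.

Definition f_img (a : nat) : seq nat :=
  match a with
  | 0 => [:: 0; 1]
  | 1 => [:: 2; 3]
  | 2 => [:: 4; 5]
  | 3 => [:: 0; 2]
  | 4 => [:: 0; 5]
  | _ => [:: 2; 5]
  end.

Definition f_seq (s : seq nat) : seq nat := flatten (map f_img s).

(* f^omega(0): its n-th letter is the n-th letter of f^(n+1)(0), which is a
   prefix of f^omega(0) of length 2^(n+1) > n. *)
Definition f_fix (n : nat) : nat := nth 0 (iter n.+1 f_seq [:: 0]) n.

Definition rho (a : nat) : bool := (a == 4) || (a == 5).

Definition w_word : bword := fun n => rho (f_fix n).

From mathcomp Require Import all_boot zify.
Set Implicit Arguments. Unset Strict Implicit. Unset Printing Implicit Defensive.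

(* The n-th letter of u = f^omega(0) is computed by the automaton q -b-> (f q)_b
   reading the binary digits of n, which gives a 6-state automaton for
   w = rho(u).
   A square of order P in w relates u(a + s) and u(a + s + P) by rho-equality.
   For odd P >= 18 this aligns rho-images of windows of length 7 at positions of
   opposite parity, which never coincide; for even P, desubstituting through the
   2-uniform morphism f gives a square of period P/2 for relations pulled back
   along f.  Only finitely many triples of relations arise, so the descent ends
   at a period in [3, 17], excluded by the factors of length 35 of u.  The five
   squares are then read off the factors of length at most 4.
   For minimality, a depth-first search builds every automaton with at most six
   states one transition at a time, in the order in which the positions
   1, 2, ... of the generated word v use them.  A branch is closed when v is
   already above w, when its prefix contains a square of order at least 3 or
   six distinct squares, or when the automaton is bisimilar to the one of w.
   The search closes every branch, so no admissible word lies below w. *)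

(** * The fixed point as an automatic sequence *)

Lemma lsb_digits_fuel f1 f2 n :
  n <= f1 -> n <= f2 -> lsb_digits f1 n = lsb_digits f2 n.
Proof.
elim: f1 f2 n => [|f1 IH] [|f2] n //= h1 h2; try by have -> : n = 0 by lia.
by case: eqP => // _; congr (_ :: _); apply: IH; lia.
Qed.

Lemma base2_half n : 0 < n -> base2 n = rcons (base2 n./2) (odd n).
Proof.
case: n => [//|k] _; rewrite /base2 /= (@lsb_digits_fuel k (k.+1)./2); try lia.
by rewrite rev_cons.
Qed.

Section Run.
Variables (Q : Type) (next : Q -> bool -> Q) (start : Q).

Definition run n := foldl next start (base2 n).

Lemma run_half n : 0 < n -> run n = next (run n./2) (odd n).
Proof. by move=> n_gt0; rewrite /run base2_half // foldl_rcons. Qed.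

Lemma run_unique (a : nat -> Q) :
  a 0 = start -> (forall n, 0 < n -> a n = next (a n./2) (odd n)) ->
  forall n, a n = run n.
Proof.
move=> a0 a_half; elim/ltn_ind => -[//|n] IH.
by rewrite a_half // run_half // IH //; lia.
Qed.

End Run.

Definition f_delta (q : nat) (b : bool) : nat := nth 0 (f_img q) b.

Lemma f_delta_lt6 q b : f_delta q b < 6.
Proof. by case: q => [|[|[|[|[|q]]]]]; case: b. Qed.

Definition f_iter k := iter k f_seq [:: 0].

Lemma size_f_seq s : size (f_seq s) = (size s).*2.
Proof.
elim: s => //= a s IH; rewrite /f_seq /= size_cat -/(f_seq s) IH.
by case: a => [|[|[|[|[|a]]]]] /=; lia.
Qed.

Lemma f_iterS k : f_iter k.+1 = f_seq (f_iter k).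
Proof. by []. Qed.

Lemma size_f_iter k : size (f_iter k) = 2 ^ k.
Proof. by elim: k => //= k IH; rewrite size_f_seq IH expnS; lia. Qed.

Lemma nth_f_seq s i : i < (size s).*2 ->
  nth 0 (f_seq s) i = f_delta (nth 0 s i./2) (odd i).
Proof.
elim: s i => [|a s IH] i //= i_lt.
rewrite /f_seq /= nth_cat -/(f_seq s).
have -> : size (f_img a) = 2 by case: a => [|[|[|[|[|a]]]]].
case: i i_lt => [|[|i]] i_lt //=.
by rewrite IH /= ?subn2 ?negbK //; lia.
Qed.

Lemma f_iter_succ_prefix k i :
  i < 2 ^ k -> nth 0 (f_iter k.+1) i = nth 0 (f_iter k) i.
Proof.
elim: k i => [|k IH] i i_lt; first by have -> : i = 0 by rewrite expn0 in i_lt; lia.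
rewrite expnS in i_lt.
rewrite f_iterS nth_f_seq; last by rewrite size_f_iter expnS; lia.
rewrite [in RHS]f_iterS nth_f_seq; last by rewrite size_f_iter; lia.
by rewrite IH //; lia.
Qed.

Lemma f_iter_prefix k k' i :
  k <= k' -> i < 2 ^ k -> nth 0 (f_iter k') i = nth 0 (f_iter k) i.
Proof.
move=> /subnK <- i_lt; elim: (k' - k) => [//|j IH].
rewrite addSn f_iter_succ_prefix ?IH //.
by apply: (leq_trans i_lt); rewrite leq_exp2l //; lia.
Qed.

Lemma f_fix_half n : f_fix n = f_delta (f_fix n./2) (odd n).
Proof.
case: n => [//|n]; rewrite /f_fix -/(f_iter n.+2) -/(f_iter (n.+1)./2.+1).
have lt_exp m : m < 2 ^ m by apply: ltn_expl.
rewrite f_iterS nth_f_seq; last first.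
  by rewrite size_f_iter; have := lt_exp n.+2; rewrite expnS; lia.
by rewrite (@f_iter_prefix (n.+1)./2.+1) //; have := lt_exp (n.+1)./2.+1; lia.
Qed.

Lemma f_fix_run n : f_fix n = run f_delta 0 n.
Proof. by apply: run_unique => // m _; apply: f_fix_half. Qed.

Lemma f_fix_lt6 n : f_fix n < 6.
Proof. by rewrite f_fix_half f_delta_lt6. Qed.

Lemma w_wordE n : w_word n = rho (run f_delta 0 n).
Proof. by rewrite /w_word f_fix_run. Qed.

(** * Factors of u *)

(* The fuel only bounds the computation: results are certified by [closed_under]. *)
Fixpoint saturate (T : eqType) (succ : T -> seq T) (fuel : nat) (todo acc : seq T)
    : seq T :=
  match fuel, todo with
  | fuel'.+1, t :: todo' =>
    let fresh := undup [seq x <- succ t | x \notin acc] in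
    saturate succ fuel' (fresh ++ todo') (fresh ++ acc)
  | _, _ => acc
  end.

Definition closed_under (T : eqType) (succ : T -> seq T) (S : seq T) :=
  all (fun t => all (fun x => x \in S) (succ t)) S.

Definition u_factor i m := map f_fix (iota i m).

Lemma size_u_factor i m : size (u_factor i m) = m.
Proof. by rewrite size_map size_iota. Qed.

Lemma nth_u_factor i m k : k < m -> nth 0 (u_factor i m) k = f_fix (i + k).
Proof. by move=> k_lt; rewrite (nth_map 0) ?size_iota // nth_iota. Qed.

Lemma u_factor_desub i m N : m < N.*2 ->
  u_factor i m = take m (drop (odd i) (f_seq (u_factor i./2 N))).
Proof.
move=> m_lt; apply: (@eq_from_nth _ 0).
  rewrite size_u_factor size_takel // size_drop size_f_seq size_u_factor.
  by case: (odd i); lia.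
move=> k; rewrite size_u_factor => k_lt.
rewrite nth_u_factor // nth_take // nth_drop nth_f_seq; last first.
  by rewrite size_u_factor; case: (odd i); lia.
rewrite nth_u_factor; last by case: (odd i) => /=; lia.
rewrite f_fix_half; congr (f_delta (f_fix _) _); first lia.
by rewrite !oddD; case: (odd i).
Qed.

(* 35 = 2 * 17 + 1: long enough to contain every square of period below 18. *)
Definition fac_len := 35.

Definition desub_succs (t : seq nat) :=
  [:: take fac_len (f_seq t); take fac_len (drop 1 (f_seq t))].

Definition u_prefix := map (run f_delta 0) (iota 0 fac_len).

Definition u_factors :=
  Eval vm_compute in saturate desub_succs 2000 [:: u_prefix] [:: u_prefix].

Lemma u_factors_closed : (u_prefix \in u_factors) && closed_under desub_succs u_factors.
Proof. by vm_compute. Qed.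

Lemma u_factor_in i : u_factor i fac_len \in u_factors.
Proof.
have [prefix_in /allP closed] := andP u_factors_closed.
elim/ltn_ind: i => -[|i] IH.
  by rewrite (_ : u_factor 0 fac_len = u_prefix) //; apply: eq_map => k; rewrite f_fix_run.
have /closed /and3P[even_in odd_in _] := IH i.+1./2 ltac:(lia).
by rewrite (@u_factor_desub _ _ fac_len) //; case: (odd i.+1); rewrite ?drop0.
Qed.

(** * Squares of order at least 3 *)

Definition rel6 := seq bool.

Definition rel_at (R : rel6) x y := nth false R (x * 6 + y).

Definition rho_rel : rel6 := mkseq (fun k => rho (k %/ 6) == rho (k %% 6)) 36.

Definition rel_pull (R : rel6) (e : bool) : rel6 :=
  mkseq (fun k => rel_at R (f_delta (k %/ 6) e) (f_delta (k %% 6) e)) 36.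

Definition rel_meet (R1 R2 : rel6) : rel6 :=
  mkseq (fun k => nth false R1 k && nth false R2 k) 36.

Lemma rel_at_mkseq F x y : x < 6 -> y < 6 ->
  rel_at (mkseq F 36) x y = F (x * 6 + y).
Proof. by move=> x_lt y_lt; rewrite /rel_at nth_mkseq //; lia. Qed.

Lemma pair_code_div x y : y < 6 -> (x * 6 + y) %/ 6 = x.
Proof. lia. Qed.

Lemma pair_code_mod x y : y < 6 -> (x * 6 + y) %% 6 = y.
Proof. lia. Qed.

Lemma rho_relE x y : x < 6 -> y < 6 -> rel_at rho_rel x y = (rho x == rho y).
Proof. by move=> x_lt y_lt; rewrite rel_at_mkseq // pair_code_div ?pair_code_mod. Qed.

Lemma rel_pullE R e x y : x < 6 -> y < 6 ->
  rel_at (rel_pull R e) x y = rel_at R (f_delta x e) (f_delta y e).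
Proof. by move=> x_lt y_lt; rewrite rel_at_mkseq // pair_code_div ?pair_code_mod. Qed.

Lemma rel_meetE R1 R2 x y : x < 6 -> y < 6 ->
  rel_at (rel_meet R1 R2) x y = rel_at R1 x y && rel_at R2 x y.
Proof. by move=> x_lt y_lt; rewrite rel_at_mkseq. Qed.

(* In a relational square (c, R0, R, R1), c extends the window by one position
   and R0, R1 govern its first and last positions; a square of w of order P is
   the case (false, rho_rel, rho_rel, rho_rel). *)
Definition rsq := (bool * rel6 * rel6 * rel6)%type.

Definition rsq_ext (st : rsq) : bool := let: (c, _, _, _) := st in c.
Definition rsq_mid (st : rsq) : rel6 := let: (_, _, R, _) := st in R.

Definition rsq_rel (st : rsq) P s : rel6 :=
  let: (c, R0, R, R1) := st in
  if s == 0 then R0 else if s == P + c - 1 then R1 else R.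

Definition is_rsq (st : rsq) P a :=
  forall s, s < P + rsq_ext st ->
    rel_at (rsq_rel st P s) (f_fix (a + s)) (f_fix (a + s + P)).

Lemma rsq_rel_mid st P s :
  s != 0 -> s != P + rsq_ext st - 1 -> rsq_rel st P s = rsq_mid st.
Proof. by case: st => [[[c R0] R] R1] /= /negPf -> /negPf ->. Qed.

(* Position s' of the halved square covers the positions 2 s' + e - b of the
   original one (b the parity of a), hence the meets of pulled-back relations. *)
Definition rsq_half (st : rsq) (b : bool) : rsq :=
  let: (c, R0, R, R1) := st in
  (b || c,
   if b then rel_pull R0 true else rel_meet (rel_pull R0 false) (rel_pull R true),
   rel_meet (rel_pull R false) (rel_pull R true),
   if b != c then rel_pull R1 false else rel_meet (rel_pull R false) (rel_pull R1 true)).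

Lemma f_fix_addDouble (e : bool) k : f_fix (e + k.*2) = f_delta (f_fix k) e.
Proof.
rewrite f_fix_half; congr (f_delta (f_fix _) _); first lia.
by rewrite oddD odd_double; case: e.
Qed.

Lemma rsq_pull st P a R (e : bool) k :
  is_rsq st P a -> ~~ odd P -> a <= e + k.*2 < a + P + rsq_ext st ->
  rsq_rel st P (e + k.*2 - a) = R ->
  rel_at (rel_pull R e) (f_fix k) (f_fix (k + P./2)).
Proof.
move=> sq P_even /andP[k_ge k_lt] <-.
rewrite rel_pullE ?f_fix_lt6 // -!f_fix_addDouble.
have -> : e + (k + P./2).*2 = e + k.*2 + P by lia.
have := sq (e + k.*2 - a) ltac:(lia).
by rewrite (_ : a + (e + k.*2 - a) = e + k.*2); last lia.
Qed.

Lemma rsq_half_ok st P a : is_rsq st P a -> ~~ odd P -> 2 < P ->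
  is_rsq (rsq_half st (odd a)) P./2 a./2.
Proof.
case: st => [[[c R0] R] R1] sq P_even P_ge s /=.
have a_split : a = odd a + (a./2).*2 by lia.
have pull := rsq_pull sq P_even.
rewrite /rsq_rel /=.
move: a_split; case: (odd a) => a_split s_lt; case: c sq pull s_lt => sq pull s_lt /=.
all: repeat case: eqP => ?.
all: rewrite ?rel_meetE ?f_fix_lt6 //=.
all: try (apply/andP; split).
all: first [apply: (pull R0) | apply: (pull R) | apply: (pull R1)]; rewrite /=; try lia.
all: repeat case: eqP => ?; try reflexivity; lia.
Qed.

Definition rsq_succs (st : rsq) := [:: rsq_half st false; rsq_half st true].

Definition rsq_start : rsq := (false, rho_rel, rho_rel, rho_rel).

Definition rsq_states :=
  Eval vm_compute in saturate rsq_succs 100 [:: rsq_start] [:: rsq_start].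

Lemma rsq_states_closed :
  (rsq_start \in rsq_states) && closed_under rsq_succs rsq_states.
Proof. by vm_compute. Qed.

Lemma rsq_mid_rho_check :
  all (fun st => all (fun x => all (fun y =>
         rel_at (rsq_mid st) x y ==> (rho x == rho y)) (iota 0 6)) (iota 0 6))
      rsq_states.
Proof. by vm_compute. Qed.

Lemma rsq_mid_rho st x y : st \in rsq_states -> x < 6 -> y < 6 ->
  rel_at (rsq_mid st) x y -> rho x = rho y.
Proof.
move=> st_in x_lt y_lt; have /allP/(_ _ st_in)/allP/(_ x) := rsq_mid_rho_check.
rewrite mem_iota x_lt => /(_ isT)/allP/(_ y); rewrite mem_iota y_lt => /(_ isT).
by move=> /implyP mid /mid /eqP.
Qed.

Definition rho_window (e : nat) (t : seq nat) := map rho (take 7 (drop e (f_seq t))).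

Lemma rho_windows_disjoint :
  all (fun x => x \notin map (rho_window 1) u_factors) (map (rho_window 0) u_factors).
Proof. by vm_compute. Qed.

Lemma u_rho_window_parity i j :
  odd i != odd j -> map rho (u_factor i 7) != map rho (u_factor j 7).
Proof.
have key t1 t2 : t1 \in u_factors -> t2 \in u_factors -> rho_window 0 t1 != rho_window 1 t2.
  move=> t1_in t2_in; apply/eqP => eq_window.
  by have /allP/(_ _ (map_f _ t1_in)) := rho_windows_disjoint; rewrite eq_window map_f.
rewrite !(@u_factor_desub _ 7 fac_len) //.
case: (odd i); case: (odd j) => //= _; last exact: key (u_factor_in _) (u_factor_in _).
by rewrite eq_sym; exact: key (u_factor_in _) (u_factor_in _).
Qed.

Definition rsq_check (st : rsq) P (t : seq nat) :=
  all (fun s => rel_at (rsq_rel st P s) (nth 0 t s) (nth 0 t (s + P)))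
      (iota 0 (P + rsq_ext st)).

Lemma no_short_rsq_check :
  all (fun P => all (fun st => all (fun t => ~~ rsq_check st P t) u_factors) rsq_states)
      (iota 3 15).
Proof. by vm_compute. Qed.

Lemma no_short_rsq P st a : 3 <= P < 18 -> st \in rsq_states -> ~ is_rsq st P a.
Proof.
move=> P_range st_in sq; have ext_le1 : rsq_ext st <= 1 by case: (rsq_ext st).
have /allP/(_ P) := no_short_rsq_check; rewrite mem_iota => /(_ ltac:(lia)).
move=> /allP/(_ _ st_in)/allP/(_ _ (u_factor_in a))/allP; apply => s.
rewrite mem_iota => /andP[_ s_lt].
by rewrite !nth_u_factor /fac_len ?addnA; [apply: sq | lia | lia].
Qed.

Lemma no_odd_rsq P st a : 9 < P -> odd P -> st \in rsq_states -> ~ is_rsq st P a.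
Proof.
move=> P_gt9 P_odd st_in sq.
have parity : odd a.+1 != odd (a.+1 + P) by rewrite oddD P_odd; case: (odd _).
apply: (negP (u_rho_window_parity parity)).
apply/eqP/(@eq_from_nth _ false) => [|t].
  by rewrite !size_map.
rewrite !size_map size_iota => t_lt.
rewrite !(nth_map 0) ?size_iota // !nth_iota // -addnA [P + t]addnC addnA.
have := sq t.+1 ltac:(lia); rewrite rsq_rel_mid; [|done|apply/eqP; lia].
by rewrite -!addSnnS addSn; apply: (rsq_mid_rho st_in); rewrite f_fix_lt6.
Qed.

Lemma no_rsq P st a : 3 <= P -> st \in rsq_states -> ~ is_rsq st P a.
Proof.
have [_ /allP closed] := andP rsq_states_closed.
elim/ltn_ind: P st a => P IH st a P_ge st_in sq.
case: (ltnP P 18) => [P_lt|P_ge18]; first by apply: (no_short_rsq _ st_in sq); lia.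
case P_odd: (odd P); first by apply: (no_odd_rsq _ P_odd st_in sq); lia.
have /and3P[half0_in half1_in _] := closed st st_in.
apply: (IH P./2 _ (rsq_half st (odd a)) a./2); try lia; first by case: (odd a).
exact: rsq_half_ok sq (negbT P_odd) _.
Qed.

Lemma w_square_rsq s n i :
  factor_at w_word i (size s) = s -> is_square_of_order s n -> is_rsq rsq_start n i.
Proof.
move=> fac [x [x_size [_ s_eq]]] k k_lt; rewrite /= addn0 in k_lt.
have -> : rsq_rel rsq_start n k = rho_rel by rewrite /=; case: ifP => //; case: ifP.
have letter j : j < size s -> w_word (i + j) = nth false s j.
  by move=> j_lt; rewrite -fac (nth_map 0) ?size_iota ?nth_iota.
have s_size : size s = n + n by rewrite s_eq size_cat x_size.
rewrite rho_relE ?f_fix_lt6 //; apply/eqP.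
rewrite -[rho _]/(w_word (i + k)) -[rho (f_fix _)]/(w_word (i + k + n)) -addnA.
rewrite !letter ?s_size; try lia.
by rewrite s_eq !nth_cat x_size k_lt ltnNge leq_addl /= addnK.
Qed.

Theorem w_no_square_ge3 : no_square_of_order_ge w_word 3.
Proof.
move=> s n [i fac] sq; rewrite ltnNge; apply/negP => n_ge.
have /andP[start_in _] := rsq_states_closed.
exact: no_rsq n_ge start_in (w_square_rsq fac sq).
Qed.

(** * The automaton and the squares of w *)

Definition w_dfao : dfao2 6 :=
  Dfao2 ord0 (fun q b => inord (f_delta q b)) (fun q => rho q).

Lemma w_dfao_generates : generates w_dfao w_word.
Proof.
have runE n : run (delta w_dfao) (q0 w_dfao) n = inord (f_fix n).
  symmetry; apply: (run_unique (a := fun n => inord (f_fix n))) => [|m _].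
    by apply: val_inj; rewrite /= inordK.
  apply: val_inj => /=.
  by rewrite !inordK ?f_delta_lt6 ?f_fix_lt6 // -f_fix_half.
by move=> n; rewrite -[foldl _ _ _]/(run _ _ n) runE /= inordK ?f_fix_lt6.
Qed.

Theorem w_two_automatic : two_automatic_le 6 w_word.
Proof. by exists 6; split => //; exists w_dfao; apply: w_dfao_generates. Qed.

Lemma factor_atE (v : bword) i len : factor_at v i len = map v (iota i len).
Proof. by rewrite /factor_at -[i]addn0 iotaDl -map_comp addn0. Qed.

Lemma w_factor_at i len :
  factor_at w_word i len = [seq rho (run f_delta 0 k) | k <- iota i len].
Proof. by rewrite factor_atE; apply: eq_map => k; rewrite w_wordE. Qed.

Definition w_squares : seq (seq bool) :=
  [:: [:: false; false]; [:: true; true]; [:: false; false; false; false];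
      [:: false; true; false; true]; [:: true; false; true; false]].

Lemma u_no_rho1111 : all (fun t => map rho (take 4 t) != nseq 4 true) u_factors.
Proof. by vm_compute. Qed.

Lemma w_no_1111 : ~ is_factor w_word (nseq 4 true).
Proof.
case=> i fac; have /allP/(_ _ (u_factor_in i))/negP := u_no_rho1111; apply.
rewrite -fac w_factor_at /u_factor -map_take take_iota -map_comp.
by apply/eqP/eq_map => k /=; rewrite f_fix_run.
Qed.

Theorem w_num_squares : num_distinct_squares w_word 5.
Proof.
exists w_squares; split => //; split => // s; split.
  rewrite !inE => /orP[/eqP->|/orP[/eqP->|/orP[/eqP->|/orP[/eqP->|/eqP->]]]].
  - by split; [exists 1, [:: false] | exists 0; rewrite w_factor_at; vm_compute].
  - by split; [exists 1, [:: true] | exists 4; rewrite w_factor_at; vm_compute].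
  - by split; [exists 2, [:: false; false] | exists 0; rewrite w_factor_at; vm_compute].
  - by split; [exists 2, [:: false; true] | exists 8; rewrite w_factor_at; vm_compute].
  - by split; [exists 2, [:: true; false] | exists 9; rewrite w_factor_at; vm_compute].
move=> [[n sq] fac]; have n_lt3 := w_no_square_ge3 fac sq.
case: sq fac => x [x_size [n_gt0 ->]] fac.
case: x x_size fac => [|a [|b [|c x]]] //= x_size fac; try lia.
  by case: a fac.
by case: a fac; case: b => fac //; case: (w_no_1111 fac).
Qed.

(** * Lexicographic minimality *)

Definition trans_at (tr : seq (option nat)) a (b : bool) := nth None tr (a.*2 + b).

Definition set_trans (tr : seq (option nat)) a (b : bool) t :=
  set_nth None tr (a.*2 + b) (Some t).

Lemma trans_at_set tr a b t a' b' :
  trans_at (set_trans tr a b t) a' b' =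
  if (a' == a) && (b' == b) then Some t else trans_at tr a' b'.
Proof.
rewrite /trans_at /set_trans nth_set_nth /=; congr (if _ then _ else _).
by case: b b' => -[]; apply/eqP/andP => [eq|[/eqP-> b_eq]] //; split; apply/eqP; lia.
Qed.

Definition pair_succs (tr : seq (option nat)) (ab : nat * nat) : seq (nat * nat) :=
  [seq (t, f_delta ab.2 b) | b <- [:: false; true],
     t <- if trans_at tr ab.1 b is Some t then [:: t] else [::]].

Definition bisim_closed (tr : seq (option nat)) (outs : seq bool) (V : seq (nat * nat)) :=
  all (fun ab => (nth false outs ab.1 == rho ab.2) &&
         all (fun b => if trans_at tr ab.1 b is Some t then (t, f_delta ab.2 b) \in V
                       else false) [:: false; true]) V.

(* Pairs (search state, state of the automaton of u) reachable from position 1;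
   position 0 is left out since the initial state never reads a leading 0. *)
Definition bisim_w (tr : seq (option nat)) (outs : seq bool) :=
  if trans_at tr 0 true is Some t0 then
    let V := saturate (pair_succs tr) 50 [:: (t0, 1)] [:: (t0, 1)] in
    ((t0, 1) \in V) && bisim_closed tr outs V
  else false.

(* [if] rather than [&&] here and in [visit]: [vm_compute] evaluates both
   arguments of [&&], which would defeat the pruning. *)
Fixpoint eq_prefix (k : nat) (a b : seq bool) : bool :=
  match k, a, b with
  | 0, _, _ => true
  | k'.+1, x :: a', y :: b' => if x == y then eq_prefix k' a' b' else false
  | _, _, _ => false
  end.

Lemma eq_prefix_take k a b :
  eq_prefix k a b -> take k a = take k b /\ k <= size a /\ k <= size b.
Proof.
elim: k a b => [|k IH] [|x a] [|y b] //=.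
by case: eqP => // -> /IH [-> sizes]; split => //; lia.
Qed.

Arguments eq_prefix : simpl never.

(* [pre] is the reversed prefix of v, so its square prefixes are the squares
   ending at the last letter read; only orders L + 1, ..., L + k are examined. *)
Fixpoint suffix_squares (pre rest : seq bool) (L k : nat) (sqs : seq (seq bool))
    : option (seq (seq bool)) :=
  match k, rest with
  | k'.+1, _ :: rest' =>
    if eq_prefix L.+1 pre rest' then
      if 3 <= L.+1 then None else
      let sq := rev (take (L.+1).*2 pre) in
      let sqs' := if sq \in sqs then sqs else sq :: sqs in
      if 5 < size sqs' then None else suffix_squares pre rest' L.+1 k' sqs'
    else suffix_squares pre rest' L.+1 k' sqs
  | _, _ => Some sqs
  end.

(* The candidate automaton is built while reading v at positions n = 1, 2, ...:
   the state at n is reached from the state at n/2 (nd_parent) by the digit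
   odd n (nd_bit); nd_queue holds the states at positions n/2 + 1, ..., n - 1,
   nd_rprefix is v_(n-1) ... v_0, and nd_wrest holds w_n w_(n+1) ... as long
   as v and w agree so far (nd_below records that v < w was seen). *)
Record node := Node {
  nd_trans : seq (option nat);
  nd_outs : seq bool;
  nd_parent : nat;
  nd_bit : bool;
  nd_queue : seq nat;
  nd_rprefix : seq bool;
  nd_squares : seq (seq bool);
  nd_below : bool;
  nd_wrest : seq bool }.

Definition with_trans (st : node) tr outs :=
  Node tr outs (nd_parent st) (nd_bit st) (nd_queue st) (nd_rprefix st)
       (nd_squares st) (nd_below st) (nd_wrest st).

Definition define_trans (st : node) t :=
  with_trans st (set_trans (nd_trans st) (nd_parent st) (nd_bit st) t) (nd_outs st).

Definition add_state (st : node) (o : bool) :=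
  with_trans st (set_trans (nd_trans st) (nd_parent st) (nd_bit st) (size (nd_outs st)))
             (rcons (nd_outs st) o).

Definition next_node (st : node) t (c below : bool) (W : seq bool) sqs :=
  let Q := rcons (nd_queue st) t in
  let pre := c :: nd_rprefix st in
  if nd_bit st then Node (nd_trans st) (nd_outs st) (head 0 Q) false (behead Q) pre sqs below W
  else Node (nd_trans st) (nd_outs st) (nd_parent st) true Q pre sqs below W.

Definition advance (rec : node -> bool) (st : node) t (c below : bool) (W : seq bool) :=
  let pre := c :: nd_rprefix st in
  if suffix_squares pre pre 0 40 (nd_squares st) is Some sqs
  then rec (next_node st t c below W sqs) else true.

Definition visit (rec : node -> bool) (st : node) t (fresh : bool) :=
  let c := nth false (nd_outs st) t in
  if nd_below st then advance rec st t c true [::] else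
  if (if fresh then bisim_w (nd_trans st) (nd_outs st) else false) then true else
  if nd_wrest st is wc :: W then
    if c == wc then advance rec st t c false W
    else if c then true else advance rec st t c true [::]
  else false.

Fixpoint search (fuel : nat) (st : node) : bool :=
  if fuel is fuel'.+1 then
    if trans_at (nd_trans st) (nd_parent st) (nd_bit st) is Some t
    then visit (search fuel') st t false
    else
      let ns := size (nd_outs st) in
      all (fun t => visit (search fuel') (define_trans st t) t true) (iota 0 ns) &&
      (if ns < 6 then visit (search fuel') (add_state st false) ns true &&
                      visit (search fuel') (add_state st true) ns true
       else true)
  else false.

Definition w_letters := Eval vm_compute in [seq rho (run f_delta 0 k) | k <- iota 1 300].

Definition root_node :=
  Node (nseq 12 None) [:: false] 0 true [::] [:: false] [::] false w_letters.

Lemma search_root : search 400 root_node.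
Proof. vm_cast_no_check (erefl true). Qed.

Section Minimality.
Variables (s : nat) (A : dfao2 s) (v : bword).
Hypotheses (s_le6 : s <= 6) (A_v : generates A v).
Hypotheses (v_sq3 : no_square_of_order_ge v 3) (v_sq5 : num_distinct_squares v 5).

Definition state_at n := run (delta A) (q0 A) n.

Lemma v_state_at n : v n = out A (state_at n).
Proof. exact: A_v. Qed.

Lemma state_at_half n : 0 < n -> state_at n = delta A (state_at n./2) (odd n).
Proof. exact: run_half. Qed.

Definition squares_ok (sqs : seq (seq bool)) :=
  uniq sqs /\ forall x, x \in sqs -> is_square x /\ is_factor v x.

Lemma size_squares_ok sqs : squares_ok sqs -> size sqs <= 5.
Proof.
case: v_sq5 => S [S_uniq [<- S_sq]] [sqs_uniq sqs_sq].
by apply: uniq_leq_size => // x /sqs_sq /S_sq.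
Qed.

Lemma suffix_square N L pre : pre = rev (map v (iota 0 N)) -> 0 < L -> L.*2 <= N ->
  take L pre = take L (drop L pre) ->
  is_square_of_order (rev (take L.*2 pre)) L /\ is_factor v (rev (take L.*2 pre)).
Proof.
move=> pre_eq L_gt0 N_ge take_eq.
have pre_size : size pre = N by rewrite pre_eq size_rev size_map size_iota.
split.
  exists (rev (take L pre)); split; first by rewrite size_rev size_takel //; lia.
  by split => //; rewrite -addnn takeD rev_cat -take_eq.
exists (N - L.*2).
rewrite factor_atE size_rev size_takel ?pre_size // pre_eq take_rev revK size_map size_iota.
by rewrite -map_drop drop_iota add0n; congr (map v (iota _ _)); lia.
Qed.

Lemma suffix_squares_ok k L pre rest sqs N :
  pre = rev (map v (iota 0 N)) -> rest = drop L pre -> squares_ok sqs ->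
  if suffix_squares pre rest L k sqs is Some sqs' then squares_ok sqs' else False.
Proof.
move=> pre_eq; have pre_size : size pre = N by rewrite pre_eq size_rev size_map size_iota.
elim: k L rest sqs => [|k IH] L rest sqs rest_eq sqs_ok; first by case: rest {rest_eq}.
case: rest rest_eq => [|x rest] rest_eq //=.
have rest_eq' : rest = drop L.+1 pre by rewrite -add1n -drop_drop -rest_eq /= drop0.
case eq_pre: (eq_prefix L.+1 pre rest); last exact: IH rest_eq' sqs_ok.
have [take_eq [_ rest_size]] := eq_prefix_take eq_pre.
rewrite rest_eq' size_drop pre_size in take_eq rest_size.
have [sq fac] := suffix_square pre_eq (ltn0Sn L) ltac:(lia) take_eq.
case: ifP => [order_ge3|_]; first by have := v_sq3 fac sq; lia.
set sq' := rev _; have sqs'_ok : squares_ok (if sq' \in sqs then sqs else sq' :: sqs).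
  case: sqs_ok => sqs_uniq sqs_sq; case: ifP => sq'_in; first by [].
  split; first by rewrite /= sq'_in.
  by move=> y; rewrite inE => /orP[/eqP ->|/sqs_sq] //; split => //; exists L.+1.
case: ifP => [too_many|_]; last exact: IH rest_eq' sqs'_ok.
by rewrite ltnNge size_squares_ok in too_many.
Qed.

Record aut_inv (tr : seq (option nat)) (outs : seq bool) (phi : nat -> 'I_s) : Prop :=
  AutInv {
  aut_root : phi 0 = q0 A;
  aut_inj : forall a b, a < size outs -> b < size outs -> phi a = phi b -> a = b;
  aut_trans : forall a b t, trans_at tr a b = Some t ->
    [/\ a < size outs, t < size outs & delta A (phi a) b = phi t];
  aut_outs : forall q, q < size outs -> nth false outs q = out A (phi q) }.

Lemma aut_size_le6 tr outs phi : aut_inv tr outs phi -> size outs <= 6.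
Proof.
case=> _ inj _ _; apply: leq_trans s_le6.
have := @leq_card _ _ (fun j : 'I_(size outs) => phi j); rewrite !card_ord; apply.
by move=> i j /inj eq_ij; apply/val_inj/eq_ij.
Qed.

Lemma define_trans_aut tr outs phi p b t :
  aut_inv tr outs phi -> p < size outs -> t < size outs -> delta A (phi p) b = phi t ->
  aut_inv (set_trans tr p b t) outs phi.
Proof.
case=> phi0 inj trans outs_ok p_lt t_lt tgt; split => // a b' t'.
by rewrite trans_at_set; case: andP => [[/eqP-> /eqP->] [<-]|_] //; apply: trans.
Qed.

Definition extend (phi : nat -> 'I_s) m x q := if q == m then x else phi q.

Lemma add_state_aut tr outs phi p b :
  aut_inv tr outs phi -> p < size outs ->
  (forall q, q < size outs -> phi q != delta A (phi p) b) ->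
  aut_inv (set_trans tr p b (size outs)) (rcons outs (out A (delta A (phi p) b)))
          (extend phi (size outs) (delta A (phi p) b)).
Proof.
case=> phi0 inj trans outs_ok p_lt fresh.
set x := delta A (phi p) b; set ns := size outs.
have old q : q < ns -> extend phi ns x q = phi q by rewrite /extend; case: eqP => //; lia.
split; rewrite ?size_rcons.
- by rewrite old //; lia.
- move=> i j i_le j_le.
  case: (ltnP i ns) => [i_lt|i_ge]; case: (ltnP j ns) => [j_lt|j_ge].
  + by rewrite !old //; apply: inj.
  + have -> : j = ns by lia.
    by rewrite old // /extend eqxx => eq_x; have := fresh _ i_lt; rewrite eq_x eqxx.
  + have -> : i = ns by lia.
    rewrite [extend _ _ _ ns]/extend eqxx old // => eq_x.
    by have := fresh _ j_lt; rewrite -eq_x eqxx.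
  + lia.
- move=> a b' t; rewrite trans_at_set; case: andP => [[/eqP-> /eqP->] [<-]|_].
    by split; [lia | lia | rewrite old // /extend eqxx].
  by case/trans => a_lt t_lt tgt; split; rewrite ?old ?tgt //; lia.
- move=> q; rewrite ltnS leq_eqVlt nth_rcons => /orP[/eqP->|q_lt].
    by rewrite ltnn eqxx /extend eqxx.
  by rewrite q_lt old // outs_ok.
Qed.

Lemma bisim_w_sound tr outs phi :
  aut_inv tr outs phi -> bisim_w tr outs -> forall k, 0 < k -> w_word k = v k.
Proof.
case=> phi0 _ trans outs_ok; rewrite /bisim_w.
case t0_eq: (trans_at tr 0 true) => [t0|//].
move: (saturate _ _ _ _) => V /andP[t0_in /allP closedV].
have reach k : 0 < k ->
    exists2 a, (a, run f_delta 0 k) \in V & a < size outs /\ phi a = state_at k.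
  elim/ltn_ind: k => k IH k_gt0; case: (ltnP k 2) => [k_lt2|k_ge2].
    have -> : k = 1 by lia.
    have [_ t0_lt t0_phi] := trans _ _ _ t0_eq.
    by exists t0; rewrite // -t0_phi phi0 (state_at_half (ltn0Sn 0)).
  have [a a_in [a_lt a_phi]] := IH k./2 ltac:(lia) ltac:(lia).
  have /andP[_ /allP/(_ (odd k))] := closedV _ a_in.
  case a_k: (trans_at tr a (odd k)) => [t|]; last by case: (odd k) => /(_ isT).
  move=> /(_ ltac:(by case: (odd k))) t_in; have [_ t_lt t_phi] := trans _ _ _ a_k.
  exists t; first by rewrite run_half.
  by split; rewrite // state_at_half // -a_phi.
move=> k k_gt0; have [a a_in [a_lt a_phi]] := reach k k_gt0.
have /andP[/eqP out_eq _] := closedV _ a_in.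
by rewrite w_wordE -out_eq outs_ok // v_state_at a_phi.
Qed.

Definition lex_below n := exists j,
  [/\ j < n, (forall i, i < j -> w_word i = v i), w_word j = true & v j = false].

Definition agree_upto n (W : seq bool) :=
  (forall i, i < n -> w_word i = v i) /\
  (forall k, k < size W -> nth false W k = w_word (n + k)).

(* [phi] sends the search states to states of A; [n] is the position to read. *)
Record Inv (st : node) (n : nat) (phi : nat -> 'I_s) : Prop := MkInv {
  inv_aut : aut_inv (nd_trans st) (nd_outs st) phi;
  inv_pos : 0 < n;
  inv_parent_lt : nd_parent st < size (nd_outs st);
  inv_parent : phi (nd_parent st) = state_at n./2;
  inv_bit : nd_bit st = odd n;
  inv_queue_size : size (nd_queue st) = n.-1 - n./2;
  inv_queue : forall k, k < size (nd_queue st) ->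
    nth 0 (nd_queue st) k < size (nd_outs st) /\
    phi (nth 0 (nd_queue st) k) = state_at (n./2 + 1 + k);
  inv_rprefix : nd_rprefix st = rev (map v (iota 0 n));
  inv_squares : squares_ok (nd_squares st);
  inv_below : nd_below st -> lex_below n;
  inv_above : ~~ nd_below st -> agree_upto n (nd_wrest st) }.

Lemma inv_target st n phi :
  Inv st n phi -> delta A (phi (nd_parent st)) (nd_bit st) = state_at n.
Proof. by case=> _ n_gt0 _ -> -> *; rewrite -state_at_half. Qed.

Lemma with_trans_inv st n phi tr outs phi' :
  Inv st n phi -> aut_inv tr outs phi' -> size (nd_outs st) <= size outs ->
  (forall q, q < size (nd_outs st) -> phi' q = phi q) -> Inv (with_trans st tr outs) n phi'.
Proof.
case=> _ n_gt0 p_lt p_eq bit q_size queue pre sqs below above aut size_le same.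
split => //=; first exact: leq_trans size_le.
  by rewrite same.
move=> k /queue[k_lt k_eq]; split; first exact: leq_trans size_le.
by rewrite same.
Qed.

Lemma next_node_inv st n phi t (c below : bool) (W : seq bool) sqs :
  Inv st n phi -> t < size (nd_outs st) -> phi t = state_at n -> c = v n ->
  squares_ok sqs -> (below -> lex_below n.+1) -> (~~ below -> agree_upto n.+1 W) ->
  Inv (next_node st t c below W sqs) n.+1 phi.
Proof.
case=> aut n_gt0 p_lt p_eq bit q_size queue pre _ _ _ t_lt t_eq c_eq sqs_ok below_ok above_ok.
have pre' : c :: nd_rprefix st = rev (map v (iota 0 n.+1)).
  by rewrite -addn1 iotaD map_cat rev_cat /= pre c_eq.
set Q := rcons (nd_queue st) t.
have Q_size : size Q = n - n./2 by rewrite size_rcons q_size; lia.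
have queue' k : k < size Q ->
    nth 0 Q k < size (nd_outs st) /\ phi (nth 0 Q k) = state_at (n./2 + 1 + k).
  rewrite size_rcons ltnS leq_eqVlt nth_rcons => /orP[/eqP->|k_lt].
    by rewrite ltnn eqxx t_eq q_size; split => //; congr state_at; lia.
  by rewrite k_lt; apply: queue.
rewrite /next_node bit; case: (boolP (odd n)) => n_odd; split => //=.
- by have [] := queue' 0 ltac:(lia); rewrite nth0.
- by have [_] := queue' 0 ltac:(lia); rewrite nth0 => ->; congr state_at; lia.
- by rewrite n_odd.
- by rewrite size_behead Q_size; lia.
- move=> k; rewrite -/Q size_behead nth_behead => k_lt.
  by have [? ->] := queue' k.+1 ltac:(lia); split => //; congr state_at; rewrite ?uphalfE; lia.
- by rewrite p_eq; congr state_at; lia.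
- by rewrite Q_size; lia.
- by move=> k /queue'; rewrite (_ : uphalf n = n./2) // uphalfE; lia.
Qed.

Definition sound (rec : node -> bool) :=
  forall st n phi, Inv st n phi -> rec st -> lex_le w_word v.

Lemma advance_sound rec st n phi t c (below : bool) (W : seq bool) :
  sound rec -> Inv st n phi -> t < size (nd_outs st) -> phi t = state_at n -> c = v n ->
  (below -> lex_below n.+1) -> (~~ below -> agree_upto n.+1 W) ->
  advance rec st t c below W -> lex_le w_word v.
Proof.
move=> rec_ok inv t_lt t_eq c_eq below_ok above_ok.
have pre' : c :: nd_rprefix st = rev (map v (iota 0 n.+1)).
  by rewrite -addn1 iotaD map_cat rev_cat /= (inv_rprefix inv) c_eq.
rewrite /advance; have := suffix_squares_ok 40 pre' (esym (drop0 _)) (inv_squares inv).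
case: suffix_squares => [sqs sqs_ok|//].
by apply/rec_ok/(next_node_inv inv).
Qed.

Lemma visit_sound rec st n phi t fresh :
  sound rec -> Inv st n phi -> t < size (nd_outs st) -> phi t = state_at n ->
  visit rec st t fresh -> lex_le w_word v.
Proof.
move=> rec_ok inv t_lt t_eq.
have adv := advance_sound rec_ok inv t_lt t_eq.
rewrite /visit (aut_outs (inv_aut inv)) // t_eq -v_state_at.
case below: (nd_below st).
  apply: adv => // _; have [j [j_lt eq_j w_j v_j]] := inv_below inv below.
  by exists j; split => //; lia.
have [agree W_eq] := inv_above inv (negbT below).
case bis: (if fresh then _ else _).
  move=> _; left => k; case: (posnP k) => [->|k_gt0]; first exact: agree (inv_pos inv).
  by move: bis; case: fresh => // /(bisim_w_sound (inv_aut inv)); apply.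
case W: (nd_wrest st) => [//|wc W'].
have wc_eq : w_word n = wc by rewrite -[n]addn0 -W_eq W.
case: eqP => [v_wc|v_wc].
  apply: adv => // _; split => [i|k k_lt].
    by rewrite ltnS leq_eqVlt => /orP[/eqP->|/agree]; rewrite ?wc_eq.
  by have := W_eq k.+1; rewrite W addSnnS; apply.
case v_n: (v n) v_wc; rewrite -wc_eq => v_wc.
  by move=> _; right; exists n; split => //; split => //; case: (w_word n) v_wc.
apply: adv (esym v_n) _ _ => // _; exists n; split => //; by case: (w_word n) v_wc.
Qed.

Lemma define_trans_inv st n phi t :
  Inv st n phi -> t < size (nd_outs st) -> phi t = state_at n ->
  Inv (define_trans st t) n phi.
Proof.
move=> inv t_lt t_eq; apply: (with_trans_inv inv) => //.
apply: define_trans_aut (inv_aut inv) (inv_parent_lt inv) t_lt _.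
by rewrite t_eq (inv_target inv).
Qed.

Lemma add_state_inv st n phi :
  Inv st n phi -> (forall q, q < size (nd_outs st) -> phi q != state_at n) ->
  Inv (add_state st (out A (state_at n))) n (extend phi (size (nd_outs st)) (state_at n)).
Proof.
move=> inv new_target; rewrite /add_state -(inv_target inv).
apply: (with_trans_inv inv); rewrite ?size_rcons //.
  by apply: add_state_aut (inv_aut inv) (inv_parent_lt inv) _; rewrite (inv_target inv).
by move=> q q_lt; rewrite /extend; case: eqP => //; lia.
Qed.

Lemma search_sound fuel : sound (search fuel).
Proof.
elim: fuel => [|fuel IH] st n phi inv //=.
have aut := inv_aut inv; have tgt := inv_target inv.
case tr_eq: trans_at => [t|].
  have [_ t_lt t_phi] := aut_trans aut tr_eq.
  by apply: (visit_sound IH inv t_lt); rewrite -t_phi tgt.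
case/andP => /allP old_ok new_ok.
case: (boolP (has (fun t => phi t == state_at n) (iota 0 (size (nd_outs st))))).
  case/hasP => t; rewrite mem_iota => /andP[_ t_lt] /eqP t_phi.
  apply: (visit_sound IH (define_trans_inv inv t_lt t_phi) t_lt t_phi (old_ok t _)).
  by rewrite mem_iota.
move=> no_old; have new_target q : q < size (nd_outs st) -> phi q != state_at n.
  move=> q_lt; apply: contra no_old => /eqP phi_q.
  by apply/hasP; exists q; rewrite ?mem_iota ?phi_q.
have inv' := add_state_inv inv new_target.
have ns_lt6 : size (nd_outs st) < 6 by have := aut_size_le6 (inv_aut inv'); rewrite size_rcons.
have new_t : extend phi (size (nd_outs st)) (state_at n) (size (nd_outs st)) = state_at n.
  by rewrite /extend eqxx.
apply: (visit_sound (fresh := true) IH inv' _ new_t); first by rewrite size_rcons.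
by move: new_ok; rewrite ns_lt6; case: (out A _) => /andP[].
Qed.

Lemma w_lettersE : w_letters = [seq rho (run f_delta 0 k) | k <- iota 1 300].
Proof. by vm_compute. Qed.

Lemma root_inv : v 0 = false -> Inv root_node 1 (fun _ => q0 A).
Proof.
move=> v0; split => //.
- split => //.
  + by case=> [|a] [|b].
  + by move=> a b t; rewrite /trans_at nth_nseq; case: ifP.
  + by case=> // _; rewrite [LHS]/= -v0 v_state_at.
- by rewrite /= v0.
- move=> _; split => /=; first by case=> // _; rewrite v0.
  by move=> k k_lt; rewrite w_lettersE (nth_map 0) ?size_iota // nth_iota // w_wordE.
Qed.

Theorem w_lex_min : lex_le w_word v.
Proof.
case v0: (v 0); first by right; exists 0.
exact: search_sound (root_inv v0) search_root.
Qed.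
End Minimality.

Theorem theorem1 :
  no_square_of_order_ge w_word 3 /\
  num_distinct_squares w_word 5 /\
  (two_automatic_le 6 w_word /\
   forall v : bword,
     two_automatic_le 6 v ->
     no_square_of_order_ge v 3 ->
     num_distinct_squares v 5 ->
     lex_le w_word v).
Proof.
split; first exact: w_no_square_ge3.
split; first exact: w_num_squares.
split; first exact: w_two_automatic.
by move=> v [s [s_le6 [A A_v]]]; exact: w_lex_min s_le6 A_v.
Qed.
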